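(* Let $T$ be a node-weighted MFQST with Steiner point cost $c>0$ on sources $z_1,\dots,z_n$ and sink $z_{BS}$, and suppose $T$ contains exactly $k$ Steiner points. Then $$k\le\frac1c\left(L_c(BST(Z))-\frac{1}{n+k+1}\sum_{i=1}^n|z_iz_{BS}|^2\right).$$
   Context: Let $Z=\{z_1,\dots,z_n\}\subset\mathbb{R}^2$ ($n\ge 1$) be a set of sources and $z_{BS}\in\mathbb{R}^2\setminus Z$ a sink; each source has supply $1$. A flow-dependent quadratic Steiner tree (FQST) consists of a finite set $S\subset\mathbb{R}^2$ of Steiner points and a tree $T$ with vertex set $Z\cup S\cup\{z_{BS}\}$ whose edges are directed towards $z_{BS}$. Every node other than the sink has exactly one out-edge, and the sink has none. Each edge $e$ carries a positive flow $f(e)$ such that: - at each source, the flow on its out-edge minus the total flow on its in-edges equals $1$; - at each Steiner point, the out-flow equals the total in-flow; - the sink receives total flow $n$. The cost is $L(T)=\sum_{e\in E(T)} f(e)|e|^2$. A node-weighted MFQST minimises $L_c(T)=L(T)+c|S|$ over all FQSTs. Beaded spanning tree $BST(Z)$: take a Euclidean minimum spanning tree on $Z\cup\{z_{BS}\}$, directed towards $z_{BS}$, with flows determined as for an FQST. On each edge $e$ with flow $f(e)$, insert the minimum number of equally spaced degree-two Steiner points along the segment so that every resulting edge has length at most $\sqrt{2c/f(e)}$. The resulting FQST is $BST(Z)$. *)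

From Stdlib Require Import Reals Lra Lia List.
Import ListNotations.
Open Scope R_scope.

Definition point : Type := (R * R)%type.

Definition dist2 (p q : point) : R :=
  (fst p - fst q) ^ 2 + (snd p - snd q) ^ 2.

Definition dist (p q : point) : R := sqrt (dist2 p q).

Definition sumR (l : list nat) (g : nat -> R) : R :=
  fold_right (fun u acc => g u + acc) 0 l.

(** A tree on the nodes [0 .. N] directed towards the sink [N]:
    every node [v < N] has exactly one out-edge [v -> par v] (the sink
    has none), and following out-edges from any node reaches the sink
    (so there is no cycle and the underlying graph is a spanning tree). *)
Definition is_sink_tree (N : nat) (par : nat -> nat) : Prop :=
  (forall v, (v < N)%nat -> (par v <= N)%nat /\ par v <> v) /\
  (forall v, (v < N)%nat -> exists m, Nat.iter m par v = N).

Definition inflow (N : nat) (par : nat -> nat) (f : nat -> R) (w : nat) : R :=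
  sumR (filter (fun u => Nat.eqb (par u) w) (seq 0 N)) f.

(** Flow on a sink tree on nodes [0..N] whose sources are the nodes [0..n-1]
    (supply 1 each); [f v] is the flow on the out-edge of [v]. *)
Definition valid_flow (n N : nat) (par : nat -> nat) (f : nat -> R) : Prop :=
  (forall v, (v < N)%nat ->
     0 < f v /\ f v - inflow N par f v = (if Nat.ltb v n then 1 else 0)) /\
  inflow N par f N = INR n.

(** Candidate FQST data: [fk] Steiner points, with positions [fsp 0 .. fsp (fk-1)].
    Nodes: [0..n-1] sources, [n..n+fk-1] Steiner points, [n+fk] the sink. *)
Record fqst := mkFQST {
  fk : nat;
  fsp : nat -> point;
  fpar : nat -> nat;
  fflow : nat -> R
}.

Definition fpos (n : nat) (z : nat -> point) (zBS : point) (T : fqst) (v : nat) : point :=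
  if Nat.ltb v n then z v
  else if Nat.ltb v (n + fk T) then fsp T (v - n) else zBS.

Definition is_FQST (n : nat) (z : nat -> point) (zBS : point) (T : fqst) : Prop :=
  let N := (n + fk T)%nat in
  is_sink_tree N (fpar T) /\
  valid_flow n N (fpar T) (fflow T) /\
  (* the vertices are distinct points: Z, S, {zBS} form the vertex set *)
  (forall u v, (u <= N)%nat -> (v <= N)%nat ->
     fpos n z zBS T u = fpos n z zBS T v -> u = v).

Definition L (n : nat) (z : nat -> point) (zBS : point) (T : fqst) : R :=
  sumR (seq 0 (n + fk T))
    (fun v => fflow T v * dist2 (fpos n z zBS T v) (fpos n z zBS T (fpar T v))).

Definition Lc (c : R) (n : nat) (z : nat -> point) (zBS : point) (T : fqst) : R :=
  L n z zBS T + c * INR (fk T).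

Definition is_MFQST (c : R) (n : nat) (z : nat -> point) (zBS : point) (T : fqst) : Prop :=
  is_FQST n z zBS T /\
  forall T', is_FQST n z zBS T' -> Lc c n z zBS T <= Lc c n z zBS T'.

(** Terminal positions: sources [0..n-1], sink [n]. *)
Definition tpos (n : nat) (z : nat -> point) (zBS : point) (v : nat) : point :=
  if Nat.ltb v n then z v else zBS.

Definition tree_length (n : nat) (z : nat -> point) (zBS : point) (p : nat -> nat) : R :=
  sumR (seq 0 n) (fun v => dist (tpos n z zBS v) (tpos n z zBS (p v))).

Definition is_EMST (n : nat) (z : nat -> point) (zBS : point) (p : nat -> nat) : Prop :=
  is_sink_tree n p /\
  forall p', is_sink_tree n p' -> tree_length n z zBS p <= tree_length n z zBS p'.

(** [m v] is the minimum number of equally spaced beads to put on the edge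
    [v -> p v] (flow [f v]) so that each resulting edge has length at most
    sqrt(2c / f v). *)
Definition bead_counts (c : R) (n : nat) (z : nat -> point) (zBS : point)
    (p : nat -> nat) (f : nat -> R) (m : nat -> nat) : Prop :=
  forall v, (v < n)%nat ->
    let d := dist (tpos n z zBS v) (tpos n z zBS (p v)) in
    let s := sqrt (2 * c / f v) in
    d / INR (S (m v)) <= s /\
    (forall j, (j < m v)%nat -> s < d / INR (S j)).

(** L_c(BST(Z)): edge [v -> p v] is split into [m v + 1] equal edges, each of
    flow [f v]; plus cost c for each of the [sum m] Steiner (bead) points. *)
Definition BST_cost (c : R) (n : nat) (z : nat -> point) (zBS : point)
    (p : nat -> nat) (f : nat -> R) (m : nat -> nat) : R :=
  sumR (seq 0 n) (fun v =>
    INR (S (m v)) * (f v * (dist (tpos n z zBS v) (tpos n z zBS (p v)) / INR (S (m v))) ^ 2))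
  + c * sumR (seq 0 n) (fun v => INR (m v)).

From Pilot Require Import Defs.
From Stdlib Require Import Reals List Lra Lia Wf_nat.
Import ListNotations.
Open Scope R_scope.

(** On any sink tree with [N] non-sink nodes, consider the
    potential [Phi w = |x_w x_sink|^2 / depth w].  Along every edge the
    potential drops by at most the squared edge length (a weighted triangle
    inequality), and by flow conservation the flow-weighted drops add up to
    the potential of the sources, each at least [|z_i z_BS|^2 / (N + 1)].
    Hence [L(T) >= sum_i |z_i z_BS|^2 / (n + k + 1)].

    Subdividing the edges of a spanning tree of the terminals
    by equally spaced beads gives a tree of cost [L_c(BST(Z))]; it is an FQST
    except that beads may coincide with other nodes.  Shifting bead number
    [s] horizontally by [e (s + 1)] removes all coincidences for all but
    finitely many [e] and changes the cost by [O(e)], so minimality of [T]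
    gives [L_c(T) <= L_c(BST(Z))]. *)

Ltac decide_nat_tests :=
  repeat match goal with
  | |- context [Nat.ltb ?a ?b] =>
      first [rewrite (proj2 (Nat.ltb_lt a b)) by lia
            |rewrite (proj2 (Nat.ltb_ge a b)) by lia]
  | |- context [Nat.leb ?a ?b] =>
      first [rewrite (proj2 (Nat.leb_le a b)) by lia
            |rewrite (proj2 (Nat.leb_gt a b)) by lia]
  | |- context [Nat.eqb ?a ?b] =>
      first [rewrite (proj2 (Nat.eqb_eq a b)) by lia
            |rewrite (proj2 (Nat.eqb_neq a b)) by lia]
  end.

Lemma sumR_cons a l g : sumR (a :: l) g = g a + sumR l g.
Proof. reflexivity. Qed.

Lemma sumR_app l1 l2 g : sumR (l1 ++ l2) g = sumR l1 g + sumR l2 g.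
Proof. induction l1 as [|a l1 IH]; simpl; [lra|]. unfold sumR in *; simpl; rewrite IH; lra. Qed.

Lemma sumR_map (h : nat -> nat) l g : sumR (map h l) g = sumR l (fun u => g (h u)).
Proof.
  induction l as [|a l IH]; [reflexivity|]. simpl map. rewrite !sumR_cons, IH. reflexivity.
Qed.

Lemma sumR_ext l F G : (forall x, In x l -> F x = G x) -> sumR l F = sumR l G.
Proof.
  induction l as [|a l IH]; intros H; [reflexivity|]. rewrite !sumR_cons.
  f_equal; [apply H; simpl|apply IH; intros; apply H; simpl]; auto.
Qed.

Lemma sumR_le l F G : (forall x, In x l -> F x <= G x) -> sumR l F <= sumR l G.
Proof.
  induction l as [|a l IH]; intros H; [simpl; lra|]. rewrite !sumR_cons.
  apply Rplus_le_compat; [apply H; simpl|apply IH; intros; apply H; simpl]; auto.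
Qed.

Lemma sumR_plus l F G : sumR l (fun u => F u + G u) = sumR l F + sumR l G.
Proof. induction l as [|a l IH]; [simpl; lra|]. rewrite !sumR_cons, IH; lra. Qed.

Lemma sumR_scal l a F : sumR l (fun u => a * F u) = a * sumR l F.
Proof. induction l as [|b l IH]; [simpl; lra|]. rewrite !sumR_cons, IH; lra. Qed.

Lemma sumR_const l a : sumR l (fun _ => a) = INR (length l) * a.
Proof.
  induction l as [|b l IH]; [simpl; lra|].
  rewrite sumR_cons, IH; simpl length; rewrite S_INR; lra.
Qed.

Lemma sumR_zero l F : (forall x, In x l -> F x = 0) -> sumR l F = 0.
Proof. intros H. rewrite (sumR_ext l F (fun _ => 0)) by auto. rewrite sumR_const. ring. Qed.

Lemma sumR_nonneg l F : (forall x, In x l -> 0 <= F x) -> 0 <= sumR l F.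
Proof. intros H. rewrite <- (Rmult_0_r (INR (length l))), <- sumR_const. apply sumR_le; auto. Qed.

Lemma sumR_filter (P : nat -> bool) l g :
  sumR (filter P l) g = sumR l (fun u => if P u then g u else 0).
Proof.
  induction l as [|a l IH]; [reflexivity|]. simpl filter. rewrite sumR_cons.
  destruct (P a); rewrite ?sumR_cons, IH; lra.
Qed.

Lemma sumR_seq_prefix n N F : (n <= N)%nat ->
  sumR (seq 0 N) (fun w => if Nat.ltb w n then F w else 0) = sumR (seq 0 n) F.
Proof.
  intros H. replace N with (n + (N - n))%nat by lia. rewrite seq_app, sumR_app.
  rewrite (sumR_zero (seq (0 + n) _)), Rplus_0_r.
  - apply sumR_ext. intros w Hw. apply in_seq in Hw. decide_nat_tests. reflexivity.
  - intros w Hw. apply in_seq in Hw. decide_nat_tests. reflexivity.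
Qed.

Lemma sumR_seq_indicator a len w (c : R) :
  sumR (seq a len) (fun u => if Nat.eqb u w then c else 0) =
  if andb (Nat.leb a w) (Nat.ltb w (a + len)) then c else 0.
Proof.
  revert a. induction len as [|len IH]; intros a; cbn [seq].
  - simpl. destruct (Nat.leb_spec a w); decide_nat_tests; reflexivity.
  - rewrite sumR_cons, IH. replace (S a + len)%nat with (a + S len)%nat by lia.
    destruct (Nat.eq_dec a w) as [<-|ne]; [|destruct (Nat.leb_spec (S a) w)];
      decide_nat_tests; simpl; lra.
Qed.

Lemma dist2_nonneg a b : 0 <= dist2 a b.
Proof.
  unfold dist2. pose proof (pow2_ge_0 (fst a - fst b)). pose proof (pow2_ge_0 (snd a - snd b)).
  lra.
Qed.

Lemma dist2_same a : dist2 a a = 0.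
Proof. unfold dist2. ring. Qed.

(** A weighted triangle inequality for squared distances: for [H >= H' + 1]
    and [H' >= 1], [|x zz|^2 / H <= |x y|^2 + |y zz|^2 / H'].  It bounds the
    drop of the depth potential along one edge. *)
Lemma dist2_weighted_triangle x y zz H H' : 1 <= H' -> H' + 1 <= H ->
  dist2 x zz / H <= dist2 x y + dist2 y zz / H'.
Proof.
  intros h1 h2. unfold dist2.
  set (a1 := fst x - fst y); set (a2 := snd x - snd y).
  set (b1 := fst y - fst zz); set (b2 := snd y - snd zz).
  replace (fst x - fst zz) with (a1 + b1) by (unfold a1, b1; ring).
  replace (snd x - snd zz) with (a2 + b2) by (unfold a2, b2; ring).
  (* |a + b|^2 H' <= (H' + 1) (H' |a|^2 + |b|^2), since the difference is |H' a - b|^2 *)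
  assert (Hab : ((a1 + b1) ^ 2 + (a2 + b2) ^ 2) * H' <=
                (H' + 1) * (H' * (a1 ^ 2 + a2 ^ 2) + (b1 ^ 2 + b2 ^ 2))).
  { pose proof (pow2_ge_0 (H' * a1 - b1)). pose proof (pow2_ge_0 (H' * a2 - b2)). nra. }
  apply Rmult_le_reg_r with (H * H'); [nra|].
  replace (((a1 + b1) ^ 2 + (a2 + b2) ^ 2) / H * (H * H'))
    with (((a1 + b1) ^ 2 + (a2 + b2) ^ 2) * H') by (field; lra).
  replace ((a1 ^ 2 + a2 ^ 2 + (b1 ^ 2 + b2 ^ 2) / H') * (H * H'))
    with (H * (H' * (a1 ^ 2 + a2 ^ 2) + (b1 ^ 2 + b2 ^ 2))) by (field; lra).
  assert (0 <= H' * (a1 ^ 2 + a2 ^ 2) + (b1 ^ 2 + b2 ^ 2)).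
  { pose proof (pow2_ge_0 a1); pose proof (pow2_ge_0 a2); pose proof (pow2_ge_0 b1);
    pose proof (pow2_ge_0 b2). nra. }
  nra.
Qed.

Definition interp (A B : point) (t : R) : point :=
  (fst A + t * (fst B - fst A), snd A + t * (snd B - snd A)).

Lemma dist2_interp A B s t : dist2 (interp A B s) (interp A B t) = (s - t) ^ 2 * dist2 A B.
Proof. unfold dist2, interp; simpl. ring. Qed.

Lemma interp_0 A B : interp A B 0 = A.
Proof. destruct A as [a1 a2]. unfold interp; simpl. f_equal; ring. Qed.

Lemma interp_1 A B : interp A B 1 = B.
Proof. destruct A, B. unfold interp; simpl. f_equal; ring. Qed.

Definition shift_x (d : R) (a : point) : point := (fst a + d, snd a).

Lemma shift_x_0 a : shift_x 0 a = a.
Proof. destruct a. unfold shift_x; simpl. f_equal; ring. Qed.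

Lemma dist2_shift_x a b d d' e : 0 <= e <= 1 ->
  dist2 (shift_x (e * d) a) (shift_x (e * d') b) <= dist2 a b + e * (dist2 a b + 2 * (d - d') ^ 2).
Proof.
  intros He. unfold dist2, shift_x; simpl.
  set (x := fst a - fst b); set (y := snd a - snd b); set (w := d - d').
  replace (fst a + e * d - (fst b + e * d')) with (x + e * w) by (unfold x, w; ring).
  pose proof (pow2_ge_0 (x - w)); pose proof (pow2_ge_0 y); pose proof (pow2_ge_0 w).
  assert (e * e * w ^ 2 <= e * w ^ 2) by (apply Rmult_le_compat_r; nra).
  nra.
Qed.

Lemma below_positive_values (l : list R) a : 0 < a ->
  exists e, 0 < e < a /\ forall x, In x l -> x <= 0 \/ e < x.
Proof.
  intros Ha. induction l as [|x l IH].
  - exists (a / 2). split; [lra|]. intros x [].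
  - destruct IH as (e & He & Hl). destruct (Rle_lt_dec x 0) as [Hx|Hx].
    + exists e. split; auto. intros y [<-|Hy]; auto.
    + exists (Rmin e (x / 2)). pose proof (Rmin_l e (x / 2)). pose proof (Rmin_r e (x / 2)).
      split; [split; [apply Rmin_pos|]; lra|].
      intros y [<-|Hy]; [right; lra|]. destruct (Hl y Hy); [left|right]; lra.
Qed.

(** Each pair [u, v] rules out at most one value of [e]. *)
Lemma generic_shift (q : nat -> point) (g : nat -> R) N a : 0 < a ->
  exists e, 0 < e < a /\ forall u v, (u <= N)%nat -> (v <= N)%nat ->
    shift_x (e * g u) (q u) = shift_x (e * g v) (q v) -> q u = q v /\ g u = g v.
Proof.
  intros Ha.
  set (bad := flat_map (fun u => map (fun v => (fst (q v) - fst (q u)) / (g u - g v)) (seq 0 (S N)))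
                       (seq 0 (S N))).
  destruct (below_positive_values bad a Ha) as (e & He & Hbad).
  exists e. split; auto. intros u v Hu Hv E.
  unfold shift_x in E. injection E as E1 E2.
  destruct (Req_dec (g u) (g v)) as [Hg|Hg].
  - split; auto. destruct (q u) as [qu1 qu2], (q v) as [qv1 qv2]. simpl in *.
    rewrite Hg in E1. f_equal; lra.
  - exfalso.
    assert (Hin : In e bad).
    { apply in_flat_map. exists u. split; [apply in_seq; lia|].
      apply in_map_iff. exists v. split; [|apply in_seq; lia].
      field_simplify_eq; [lra|]. intro C. apply Hg. lra. }
    destruct (Hbad e Hin); lra.
Qed.

Section SinkTree.
Variables (N : nat) (par : nat -> nat).
Hypothesis tree : is_sink_tree N par.

Fixpoint hops (fuel w : nat) : nat :=
  match fuel with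
  | O => O
  | S fuel' => if Nat.eqb w N then O else S (hops fuel' (par w))
  end.

Definition depth (w : nat) : nat := hops (S N) w.

Lemma hops_le fuel w : (hops fuel w <= fuel)%nat.
Proof.
  revert w; induction fuel as [|fuel IH]; intros w; simpl; [lia|].
  destruct (Nat.eqb w N); [lia|]. specialize (IH (par w)); lia.
Qed.

Lemma hops_exact fuel : forall w d, Nat.iter d par w = N ->
  (forall i, (i < d)%nat -> Nat.iter i par w <> N) -> (d <= fuel)%nat -> hops fuel w = d.
Proof.
  induction fuel as [|fuel IH]; intros w d Hd Hmin Hle; simpl; [lia|].
  destruct d as [|d].
  - simpl in Hd. subst. rewrite Nat.eqb_refl. reflexivity.
  - pose proof (Hmin O ltac:(lia)) as Hw. simpl in Hw. rewrite (proj2 (Nat.eqb_neq w N) Hw).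
    f_equal. apply IH; [rewrite <- Nat.iter_succ_r; exact Hd| |lia].
    intros i Hi. rewrite <- Nat.iter_succ_r. apply Hmin. lia.
Qed.

(** Pigeonhole: a path that reaches the sink for the first time after [d]
    steps visits [d] distinct non-sink nodes, so [d <= N]. *)
Lemma first_arrival_le w d : (w <= N)%nat -> Nat.iter d par w = N ->
  (forall i, (i < d)%nat -> Nat.iter i par w <> N) -> (d <= N)%nat.
Proof.
  intros Hw Hd Hmin.
  assert (Hlt : forall i, (i < d)%nat -> (Nat.iter i par w < N)%nat).
  { induction i as [|i IH]; intros Hi; pose proof (Hmin _ Hi) as Hne; simpl in *; [lia|].
    destruct tree as [Hpar _]. destruct (Hpar (Nat.iter i par w) (IH ltac:(lia))). lia. }
  assert (Hdistinct : NoDup (map (fun i => Nat.iter i par w) (seq 0 d))).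
  { apply NoDup_map_NoDup_ForallPairs; [|apply seq_NoDup].
    (* a repetition [a < b] would give an earlier arrival at step [d - b + a] *)
    assert (Hrep : forall a b, (a < b < d)%nat -> Nat.iter a par w <> Nat.iter b par w).
    { intros a b Hab E. apply (Hmin (d - b + a)%nat); [lia|].
      rewrite Nat.iter_add, E, <- Nat.iter_add. replace (d - b + b)%nat with d by lia. exact Hd. }
    intros a b Ha Hb E. apply in_seq in Ha; apply in_seq in Hb.
    destruct (Nat.lt_trichotomy a b) as [L|[L|L]]; [exfalso; eapply Hrep; eauto; lia|exact L|].
    exfalso; eapply Hrep; [|symmetry; exact E]; lia. }
  assert (Hincl : incl (map (fun i => Nat.iter i par w) (seq 0 d)) (seq 0 N)).
  { intros y Hy. apply in_map_iff in Hy. destruct Hy as (i & <- & Hi).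
    apply in_seq in Hi. apply in_seq. specialize (Hlt i ltac:(lia)). lia. }
  pose proof (NoDup_incl_length Hdistinct Hincl). rewrite length_map, !length_seq in *. lia.
Qed.

Lemma hops_to_sink w : (w <= N)%nat -> exists d, (d <= N)%nat /\
  Nat.iter d par w = N /\ forall i, (i < d)%nat -> Nat.iter i par w <> N.
Proof.
  intros Hw. destruct (Nat.eq_dec w N) as [->|ne].
  { exists O. repeat split; [lia|intros; lia]. }
  destruct tree as [_ Hreach]. destruct (Hreach w ltac:(lia)) as [m Hm].
  destruct (dec_inh_nat_subset_has_unique_least_element (fun k => Nat.iter k par w = N))
    as (d & [Hd Hleast] & _); [intros k; apply Nat.eq_decidable|exists m; exact Hm|].
  assert (Hmin : forall i, (i < d)%nat -> Nat.iter i par w <> N).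
  { intros i Hi E. specialize (Hleast i E). lia. }
  exists d. repeat split; auto. eapply first_arrival_le; eauto.
Qed.

Lemma depth_le w : (depth w <= S N)%nat.
Proof. apply hops_le. Qed.

Lemma depth_par v : (v < N)%nat -> depth v = S (depth (par v)).
Proof.
  intros Hv. unfold depth at 1. cbn [hops]. rewrite (proj2 (Nat.eqb_neq v N)) by lia. f_equal.
  unfold depth.
  destruct tree as [Hpar _]. destruct (Hpar v Hv) as [Hle _].
  destruct (hops_to_sink (par v) Hle) as (d & HdN & Hd & Hmin).
  rewrite !(hops_exact _ _ d); auto; lia.
Qed.

Lemma par_le v : (v < N)%nat -> (par v <= N)%nat.
Proof. intros Hv. destruct tree as [Hpar _]. apply (Hpar v Hv). Qed.

Lemma sumR_by_parent (fl G : nat -> R) l : (forall v, In v l -> (par v <= N)%nat) ->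
  sumR l (fun v => fl v * G (par v)) =
  sumR (seq 0 (S N)) (fun w => G w * sumR (filter (fun u => Nat.eqb (par u) w) l) fl).
Proof.
  induction l as [|v l IH]; intros Hl.
  - symmetry. apply sumR_zero. intros; simpl; ring.
  - rewrite sumR_cons, IH by (intros; apply Hl; simpl; auto). symmetry.
    rewrite (sumR_ext _ _ (fun w => (if Nat.eqb w (par v) then G (par v) * fl v else 0)
       + G w * sumR (filter (fun u => Nat.eqb (par u) w) l) fl)).
    + rewrite sumR_plus, sumR_seq_indicator.
      specialize (Hl v (or_introl eq_refl)). decide_nat_tests. simpl. lra.
    + intros w _. simpl filter. rewrite (Nat.eqb_sym w).
      destruct (Nat.eqb_spec (par v) w) as [<-|]; rewrite ?sumR_cons; lra.
Qed.

Lemma flow_divergence n fl (Phi : nat -> R) : (n <= N)%nat ->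
  valid_flow n N par fl -> Phi N = 0 ->
  sumR (seq 0 N) (fun v => fl v * (Phi v - Phi (par v))) = sumR (seq 0 n) Phi.
Proof.
  intros HnN [Hcons _] HPhiN.
  assert (Hbalance : sumR (seq 0 N) (fun v => fl v * Phi v) =
    sumR (seq 0 N) (fun w => Phi w * inflow N par fl w) +
    sumR (seq 0 N) (fun w => if Nat.ltb w n then Phi w else 0)).
  { rewrite <- sumR_plus. apply sumR_ext. intros w Hw. apply in_seq in Hw.
    destruct (Hcons w ltac:(lia)) as [_ E]. destruct (Nat.ltb w n); nra. }
  rewrite <- (sumR_seq_prefix n N) by auto.
  rewrite (sumR_ext _ _ (fun v => fl v * Phi v + -1 * (fl v * Phi (par v)))) by (intros; ring).
  rewrite sumR_plus, sumR_scal, sumR_by_parent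
    by (intros v Hv; apply in_seq in Hv; apply par_le; lia).
  rewrite seq_S, sumR_app, sumR_cons, Nat.add_0_l, HPhiN. change (sumR [] ?g) with 0.
  unfold inflow in Hbalance. rewrite Hbalance. ring.
Qed.

(** Lower bound on the cost of any flow on the tree: with the potential
    [Phi w = |x_w x_N|^2 / depth w], each edge pays at least its potential
    drop, and the drops add up to the source potentials, each at least
    [|x_i x_N|^2 / (N + 1)]. *)
Lemma flow_cost_lower_bound n fl (x : nat -> point) : (n <= N)%nat ->
  valid_flow n N par fl ->
  / INR (N + 1) * sumR (seq 0 n) (fun i => dist2 (x i) (x N)) <=
  sumR (seq 0 N) (fun v => fl v * dist2 (x v) (x (par v))).
Proof.
  intros HnN Hflow.
  set (Phi := fun w => dist2 (x w) (x N) / INR (depth w)).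
  assert (HPhiN : Phi N = 0) by (unfold Phi; rewrite dist2_same; unfold Rdiv; ring).
  assert (Hdepth1 : forall v, (v < N)%nat -> 1 <= INR (depth v)).
  { intros v Hv. rewrite depth_par by auto. apply (le_INR 1). lia. }
  assert (Hdrop : forall v, (v < N)%nat -> Phi v - Phi (par v) <= dist2 (x v) (x (par v))).
  { intros v Hv. pose proof (Hdepth1 v Hv). pose proof (dist2_nonneg (x v) (x N)).
    destruct (Nat.eq_dec (par v) N) as [E|E].
    - rewrite E, HPhiN. unfold Phi.
      assert (0 < / INR (depth v) <= 1).
      { split; [apply Rinv_0_lt_compat; lra|rewrite <- Rinv_1; apply Rinv_le_contravar; lra]. }
      unfold Rdiv. nra.
    - unfold Phi. pose proof (par_le v Hv).
      pose proof (Hdepth1 (par v) ltac:(lia)). rewrite (depth_par v Hv), S_INR.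
      pose proof (dist2_weighted_triangle (x v) (x (par v)) (x N)
                    (INR (depth (par v)) + 1) (INR (depth (par v)))). lra. }
  pose proof Hflow as [Hcons _].
  apply Rle_trans with (sumR (seq 0 n) Phi).
  - rewrite <- sumR_scal. apply sumR_le. intros i Hi. apply in_seq in Hi.
    unfold Phi. pose proof (Hdepth1 i ltac:(lia)). pose proof (dist2_nonneg (x i) (x N)).
    assert (INR (depth i) <= INR (N + 1)) by (apply le_INR; pose proof (depth_le i); lia).
    unfold Rdiv. rewrite Rmult_comm. apply Rmult_le_compat_l; auto. apply Rinv_le_contravar; lra.
  - rewrite <- (flow_divergence n fl Phi) by auto. apply sumR_le. intros v Hv. apply in_seq in Hv.
    destruct (Hcons v ltac:(lia)) as [Hpos _]. specialize (Hdrop v ltac:(lia)). nra.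
Qed.

End SinkTree.

Lemma map_along_path (h : nat -> nat) x a len y :
  h x = (if Nat.eqb len 0 then y else a) ->
  (forall j, (j < len)%nat -> h (a + j)%nat = if Nat.ltb (S j) len then (a + S j)%nat else y) ->
  map h (x :: seq a len) = seq a len ++ [y].
Proof.
  revert x a. induction len as [|len IH]; intros x a Hx Hstep; simpl map.
  - rewrite Hx. reflexivity.
  - rewrite Hx. cbn [seq app Nat.eqb]. f_equal. apply IH.
    + rewrite <- (Nat.add_0_r a), Hstep by lia. destruct len; simpl; [reflexivity|]. f_equal; lia.
    + intros j Hj. replace (S a + j)%nat with (a + S j)%nat by lia. rewrite Hstep by lia.
      destruct (Nat.ltb_spec (S (S j)) (S len)); decide_nat_tests; [lia|reflexivity].
Qed.

(** Lay out consecutive blocks of sizes [m 0, m 1, ...]: block [v] occupies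
    the positions [offset m v + j] for [j < m v]. *)
Fixpoint offset (m : nat -> nat) (v : nat) : nat :=
  match v with O => O | S v' => (offset m v' + m v')%nat end.

Lemma offset_mono m a b : (a <= b)%nat -> (offset m a <= offset m b)%nat.
Proof. induction 1; simpl; lia. Qed.

Lemma offset_block_unique m v v' j j' : (j < m v)%nat -> (j' < m v')%nat ->
  (offset m v + j = offset m v' + j')%nat -> v = v'.
Proof.
  intros Hj Hj' E. destruct (Nat.lt_trichotomy v v') as [L|[L|L]]; auto.
  - pose proof (offset_mono m (S v) v' L). simpl in *. lia.
  - pose proof (offset_mono m (S v') v L). simpl in *. lia.
Qed.

Lemma offset_cover m k s : (s < offset m k)%nat ->
  exists v j, (v < k)%nat /\ (j < m v)%nat /\ s = (offset m v + j)%nat.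
Proof.
  induction k as [|k IH]; simpl; intros H; [lia|].
  destruct (Nat.lt_ge_cases s (offset m k)) as [L|L].
  - destruct (IH L) as (v & j & ? & ? & ?). exists v, j. repeat split; auto; lia.
  - exists k, (s - offset m k)%nat. repeat split; lia.
Qed.

Lemma sumR_blocks m a k F : sumR (seq a (offset m k)) F =
  sumR (seq 0 k) (fun v => sumR (seq (a + offset m v) (m v)) F).
Proof.
  induction k as [|k IH]; [reflexivity|]. cbn [offset].
  rewrite seq_app, sumR_app, IH, seq_S, sumR_app. cbn. lra.
Qed.

Lemma INR_offset m k : INR (offset m k) = sumR (seq 0 k) (fun v => INR (m v)).
Proof.
  induction k as [|k IH]; [reflexivity|]. cbn [offset].
  rewrite plus_INR, IH, seq_S, sumR_app. cbn. lra.
Qed.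

Definition block (m : nat -> nat) (k s : nat) : nat :=
  length (filter (fun u => Nat.leb (offset m (S u)) s) (seq 0 k)).

Lemma block_spec m k v j : (v < k)%nat -> (j < m v)%nat -> block m k (offset m v + j) = v.
Proof.
  intros Hv Hj. unfold block.
  assert (Hcount : forall k', (k' <= k)%nat ->
    length (filter (fun u => Nat.leb (offset m (S u)) (offset m v + j)) (seq 0 k')) = Nat.min v k').
  { induction k' as [|k' IH]; intros Hk'; [simpl; lia|].
    rewrite seq_S, filter_app, length_app, IH by lia. simpl.
    destruct (Nat.lt_ge_cases k' v) as [L|L].
    - pose proof (offset_mono m (S k') v L). simpl in *. decide_nat_tests. simpl. lia.
    - pose proof (offset_mono m (S v) (S k') ltac:(lia)).
      simpl in *. decide_nat_tests. simpl. lia. }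
  rewrite Hcount; lia.
Qed.

(** Starting from a spanning tree [p] on the terminals
    (sources [0..n-1], sink [n]) with flow [f], the edge out of source [v] is
    subdivided by [m v] beads.  In the new tree the sources keep their
    numbers, the beads of edge [v] are the nodes [bead v j] ([j < m v]),
    numbered along the edge, and the sink becomes node [n + K]. *)
Section BeadedTree.
Variables (n : nat) (p : nat -> nat) (f : nat -> R) (m : nat -> nat).
Hypothesis tree : is_sink_tree n p.
Hypothesis flow : valid_flow n n p f.

Definition K : nat := offset m n.
Definition sink : nat := (n + K)%nat.
Definition bead (v j : nat) : nat := (n + offset m v + j)%nat.

Definition emb (x : nat) : nat := if Nat.ltb x n then x else sink.

Definition edge_head (v : nat) : nat := emb (p v).

Definition bead_edge (u : nat) : nat := block m n (u - n).
Definition bead_index (u : nat) : nat := (u - n - offset m (bead_edge u))%nat.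

Definition bpar (u : nat) : nat :=
  if Nat.ltb u n then (if Nat.eqb (m u) 0 then edge_head u else bead u 0)
  else let v := bead_edge u in
       if Nat.ltb (S (bead_index u)) (m v) then bead v (S (bead_index u)) else edge_head v.

Definition bflow (u : nat) : R := if Nat.ltb u n then f u else f (bead_edge u).

Lemma bead_lt_sink v j : (v < n)%nat -> (j < m v)%nat -> (n <= bead v j < sink)%nat.
Proof.
  intros Hv Hj. pose proof (offset_mono m (S v) n Hv). unfold bead, sink, K. simpl in *. lia.
Qed.

Lemma bead_edge_bead v j : (v < n)%nat -> (j < m v)%nat -> bead_edge (bead v j) = v.
Proof.
  intros Hv Hj. unfold bead_edge, bead.
  replace (n + offset m v + j - n)%nat with (offset m v + j)%nat by lia.
  apply block_spec; auto.
Qed.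

Lemma bead_index_bead v j : (v < n)%nat -> (j < m v)%nat -> bead_index (bead v j) = j.
Proof. intros Hv Hj. unfold bead_index. rewrite bead_edge_bead by auto. unfold bead. lia. Qed.

Lemma bpar_source v : (v < n)%nat ->
  bpar v = if Nat.eqb (m v) 0 then edge_head v else bead v 0.
Proof. intros Hv. unfold bpar. decide_nat_tests. reflexivity. Qed.

Lemma bpar_bead v j : (v < n)%nat -> (j < m v)%nat ->
  bpar (bead v j) = if Nat.ltb (S j) (m v) then bead v (S j) else edge_head v.
Proof.
  intros Hv Hj. pose proof (bead_lt_sink v j Hv Hj). unfold bpar. decide_nat_tests.
  rewrite bead_edge_bead, bead_index_bead by auto. reflexivity.
Qed.

Lemma bflow_source v : (v < n)%nat -> bflow v = f v.
Proof. intros Hv. unfold bflow. decide_nat_tests. reflexivity. Qed.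

Lemma bflow_bead v j : (v < n)%nat -> (j < m v)%nat -> bflow (bead v j) = f v.
Proof.
  intros Hv Hj. pose proof (bead_lt_sink v j Hv Hj). unfold bflow. decide_nat_tests.
  rewrite bead_edge_bead; auto.
Qed.

Lemma node_cases u : (u < sink)%nat ->
  (u < n)%nat \/ exists v j, (v < n)%nat /\ (j < m v)%nat /\ u = bead v j.
Proof.
  intros Hu. destruct (Nat.lt_ge_cases u n) as [L|L]; [left; auto|right].
  destruct (offset_cover m n (u - n)) as (v & j & Hv & Hj & E); [unfold sink, K in Hu; lia|].
  exists v, j. unfold bead. repeat split; auto; lia.
Qed.

Lemma emb_cases x : (x <= n)%nat -> (x < n /\ emb x = x)%nat \/ (x = n /\ emb x = sink).
Proof. intros Hx. unfold emb. destruct (Nat.ltb_spec x n); [left|right]; split; auto; lia. Qed.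

Lemma emb_source x : (x < n)%nat -> emb x = x.
Proof. intros Hx. unfold emb. decide_nat_tests. reflexivity. Qed.

Lemma emb_sink : emb n = sink.
Proof. unfold emb. rewrite Nat.ltb_irrefl. reflexivity. Qed.

Lemma emb_inj x y : (x <= n)%nat -> (y <= n)%nat -> emb x = emb y -> x = y.
Proof.
  intros Hx Hy. unfold sink, K in *.
  destruct (emb_cases x Hx) as [[? ->]|[? ->]]; destruct (emb_cases y Hy) as [[? ->]|[? ->]];
    unfold sink; lia.
Qed.

Lemma edge_head_cases v : (v < n)%nat -> (edge_head v < n)%nat \/ edge_head v = sink.
Proof.
  intros Hv. unfold edge_head. pose proof (par_le n p tree v Hv).
  destruct (emb_cases (p v)) as [[? ->]|[? ->]]; auto.
Qed.

Definition chain (v : nat) : list nat := v :: seq (bead v 0) (m v).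

Lemma chain_parents v : (v < n)%nat -> map bpar (chain v) = seq (bead v 0) (m v) ++ [edge_head v].
Proof.
  intros Hv. apply map_along_path.
  - rewrite bpar_source; auto.
  - intros j Hj. replace (bead v 0 + j)%nat with (bead v j) by (unfold bead; lia).
    rewrite bpar_bead by auto. unfold bead. rewrite !Nat.add_0_r. reflexivity.
Qed.

Lemma sumR_chains F : sumR (seq 0 sink) F = sumR (seq 0 n) (fun v => sumR (chain v) F).
Proof.
  unfold sink, K. rewrite seq_app, sumR_app, sumR_blocks, <- sumR_plus.
  apply sumR_ext. intros v _. unfold chain, bead. rewrite sumR_cons. do 3 f_equal. lia.
Qed.

Lemma chain_inflow v w : (v < n)%nat ->
  sumR (chain v) (fun u => if Nat.eqb (bpar u) w then bflow u else 0) =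
  (if andb (Nat.leb (bead v 0) w) (Nat.ltb w (bead v 0 + m v)) then f v else 0) +
  (if Nat.eqb (edge_head v) w then f v else 0).
Proof.
  intros Hv.
  rewrite (sumR_ext _ _ (fun u => if Nat.eqb (bpar u) w then f v else 0)).
  - rewrite <- (sumR_map bpar (chain v) (fun x => if Nat.eqb x w then f v else 0)).
    rewrite chain_parents, sumR_app, sumR_seq_indicator by auto. simpl. ring.
  - intros u Hu. destruct Hu as [<-|Hu]; [rewrite bflow_source; auto|].
    apply in_seq in Hu. replace u with (bead v (u - bead v 0)) by (unfold bead in *; lia).
    rewrite bflow_bead; auto. unfold bead in *; lia.
Qed.

Lemma inflow_by_chains w : inflow sink bpar bflow w =
  sumR (seq 0 n) (fun v => sumR (chain v) (fun u => if Nat.eqb (bpar u) w then bflow u else 0)).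
Proof. unfold inflow. rewrite sumR_filter. apply sumR_chains. Qed.

Lemma inflow_terminal x : (x <= n)%nat -> inflow sink bpar bflow (emb x) = inflow n p f x.
Proof.
  intros Hx. rewrite inflow_by_chains. unfold inflow. rewrite sumR_filter.
  apply sumR_ext. intros v Hv. apply in_seq in Hv. rewrite chain_inflow by lia.
  pose proof (offset_mono m (S v) n ltac:(lia)).
  assert (Hout : andb (Nat.leb (bead v 0) (emb x)) (Nat.ltb (emb x) (bead v 0 + m v)) = false).
  { destruct (emb_cases x Hx) as [[? ->]|[? ->]]; unfold bead, sink, K in *; simpl in *;
      decide_nat_tests; reflexivity. }
  rewrite Hout. unfold edge_head. pose proof (par_le n p tree v ltac:(lia)).
  destruct (Nat.eqb_spec (p v) x) as [<-|ne].
  - rewrite Nat.eqb_refl. ring.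
  - destruct (Nat.eqb_spec (emb (p v)) (emb x)) as [E|]; [apply emb_inj in E; auto; lia|ring].
Qed.

Lemma bead_in_chain v' v j : (v' < n)%nat -> (v < n)%nat -> (j < m v)%nat ->
  (bead v' 0 <= bead v j < bead v' 0 + m v')%nat -> v' = v.
Proof.
  intros Hv' Hv Hj Hin. unfold bead in Hin.
  apply (offset_block_unique m v' v (n + offset m v + j - (n + offset m v' + 0)) j); lia.
Qed.

Lemma inflow_bead v j : (v < n)%nat -> (j < m v)%nat -> inflow sink bpar bflow (bead v j) = f v.
Proof.
  intros Hv Hj. rewrite inflow_by_chains.
  rewrite (sumR_ext _ _ (fun v' => if Nat.eqb v' v then f v else 0)).
  - rewrite sumR_seq_indicator. decide_nat_tests. reflexivity.
  - intros v' Hv'. apply in_seq in Hv'. rewrite chain_inflow by lia.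
    pose proof (bead_lt_sink v j Hv Hj).
    replace (Nat.eqb (edge_head v') (bead v j)) with false
      by (symmetry; apply Nat.eqb_neq; destruct (edge_head_cases v'); lia).
    destruct (Nat.eq_dec v' v) as [->|ne].
    + unfold bead. decide_nat_tests. simpl. ring.
    + decide_nat_tests. destruct (Nat.leb_spec (bead v' 0) (bead v j)); simpl; [|ring].
      destruct (Nat.ltb_spec (bead v j) (bead v' 0 + m v')); [|ring].
      exfalso. apply ne, (bead_in_chain v' v j); auto; lia.
Qed.

Lemma bflow_valid : valid_flow n sink bpar bflow.
Proof.
  destruct flow as [Hcons Hsink]. split.
  - intros u Hu. destruct (node_cases u Hu) as [Hsrc|(v & j & Hv & Hj & ->)].
    + rewrite bflow_source by auto. replace (inflow sink bpar bflow u) with (inflow n p f u).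
      * apply Hcons; auto.
      * rewrite <- inflow_terminal, emb_source by lia. reflexivity.
    + rewrite bflow_bead, inflow_bead by auto. pose proof (bead_lt_sink v j Hv Hj).
      destruct (Hcons v Hv) as [Hpos _]. decide_nat_tests. split; [auto|ring].
  - rewrite <- Hsink, <- inflow_terminal, emb_sink by lia. reflexivity.
Qed.

Lemma iter_from_bead v j : (v < n)%nat -> (j < m v)%nat ->
  Nat.iter (m v - j) bpar (bead v j) = edge_head v.
Proof.
  intros Hv Hj. remember (m v - j - 1)%nat as k eqn:Hk. revert j Hj Hk.
  induction k as [|k IH]; intros j Hj Hk.
  - replace (m v - j)%nat with 1%nat by lia. simpl.
    rewrite bpar_bead by auto. decide_nat_tests. reflexivity.
  - replace (m v - j)%nat with (S (m v - S j)) by lia.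
    rewrite Nat.iter_succ_r, bpar_bead by auto. decide_nat_tests. apply IH; lia.
Qed.

Lemma iter_from_source v : (v < n)%nat -> Nat.iter (S (m v)) bpar v = edge_head v.
Proof.
  intros Hv. rewrite Nat.iter_succ_r, bpar_source by auto.
  destruct (Nat.eqb_spec (m v) 0) as [->|Hm]; [reflexivity|].
  pose proof (iter_from_bead v 0 Hv ltac:(lia)) as Hchain.
  rewrite Nat.sub_0_r in Hchain. exact Hchain.
Qed.

Lemma terminal_reaches_sink x : (x <= n)%nat -> exists k, Nat.iter k bpar (emb x) = sink.
Proof.
  intros Hx. destruct (Nat.eq_dec x n) as [->|ne].
  { exists O. apply emb_sink. }
  destruct tree as [_ Hreach]. destruct (Hreach x ltac:(lia)) as [M HM]. clear Hreach.
  revert x Hx ne HM. induction M as [|M IH]; intros x Hx ne HM; [simpl in HM; lia|].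
  rewrite Nat.iter_succ_r in HM. pose proof (par_le n p tree x ltac:(lia)).
  destruct (Nat.eq_dec (p x) n) as [Hpx|Hpx].
  - exists (S (m x)). rewrite emb_source, iter_from_source by lia.
    unfold edge_head. rewrite Hpx. apply emb_sink.
  - destruct (IH (p x) ltac:(lia) Hpx HM) as [k Hk]. exists (k + S (m x))%nat.
    rewrite Nat.iter_add, emb_source, iter_from_source by lia. exact Hk.
Qed.

Lemma bpar_tree : is_sink_tree sink bpar.
Proof.
  split; intros u Hu; destruct (node_cases u Hu) as [Hsrc|(v & j & Hv & Hj & ->)].
  - rewrite bpar_source by auto. destruct (Nat.eqb_spec (m u) 0).
    + unfold edge_head. pose proof (par_le n p tree u Hsrc). destruct tree as [Hpar _].
      destruct (Hpar u Hsrc) as [_ Hne].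
      destruct (emb_cases (p u)) as [[? ->]|[? ->]]; unfold sink; lia.
    + pose proof (bead_lt_sink u 0 Hsrc ltac:(lia)). lia.
  - rewrite bpar_bead by auto. pose proof (bead_lt_sink v j Hv Hj).
    destruct (Nat.ltb_spec (S j) (m v)).
    + pose proof (bead_lt_sink v (S j) Hv ltac:(lia)). unfold bead in *. lia.
    + destruct (edge_head_cases v Hv); lia.
  - destruct (terminal_reaches_sink (p u) (par_le n p tree u Hsrc)) as [k Hk].
    exists (k + S (m u))%nat. rewrite Nat.iter_add, iter_from_source; auto.
  - destruct (terminal_reaches_sink (p v) (par_le n p tree v Hv)) as [k Hk].
    exists (k + (m v - j))%nat. rewrite Nat.iter_add, iter_from_bead; auto.
Qed.

Variables (z : nat -> point) (zBS : point).

Definition edge_point (v i : nat) : point :=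
  interp (z v) (tpos n z zBS (p v)) (INR i / INR (S (m v))).

Definition bpos (u : nat) : point :=
  if Nat.ltb u n then z u
  else if Nat.ltb u sink then edge_point (bead_edge u) (S (bead_index u)) else zBS.

Lemma bpos_bead v j : (v < n)%nat -> (j < m v)%nat -> bpos (bead v j) = edge_point v (S j).
Proof.
  intros Hv Hj. pose proof (bead_lt_sink v j Hv Hj). unfold bpos. decide_nat_tests.
  rewrite bead_edge_bead, bead_index_bead; auto.
Qed.

Lemma bpos_emb x : (x <= n)%nat -> bpos (emb x) = tpos n z zBS x.
Proof.
  intros Hx. unfold bpos, tpos. destruct (emb_cases x Hx) as [[? ->]|[-> ->]].
  - decide_nat_tests. reflexivity.
  - unfold sink. rewrite Nat.ltb_irrefl. decide_nat_tests. reflexivity.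
Qed.

Lemma edge_point_start v : edge_point v 0 = z v.
Proof. unfold edge_point. rewrite Rdiv_0_l. apply interp_0. Qed.

Lemma edge_point_end v : edge_point v (S (m v)) = tpos n z zBS (p v).
Proof. unfold edge_point. rewrite Rdiv_diag by (apply not_0_INR; lia). apply interp_1. Qed.

Lemma chain_step v u : (v < n)%nat -> In u (chain v) ->
  exists i, bpos u = edge_point v i /\ bpos (bpar u) = edge_point v (S i).
Proof.
  intros Hv [<-|Hu].
  - exists O. rewrite edge_point_start. split.
    + unfold bpos. decide_nat_tests. reflexivity.
    + rewrite bpar_source by auto. destruct (Nat.eqb_spec (m v) 0) as [Hm|Hm].
      * unfold edge_head. rewrite bpos_emb by (apply (par_le n p tree v Hv)).
        rewrite <- edge_point_end, Hm. reflexivity.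
      * apply bpos_bead; lia.
  - apply in_seq in Hu. set (j := (u - bead v 0)%nat).
    replace u with (bead v j) in * by (unfold j, bead in *; lia).
    assert (Hj : (j < m v)%nat) by (unfold j, bead in *; lia).
    exists (S j). rewrite bpos_bead, bpar_bead by auto. split; [reflexivity|].
    destruct (Nat.ltb_spec (S j) (m v)); [apply bpos_bead; auto|].
    unfold edge_head. rewrite bpos_emb by (apply (par_le n p tree v Hv)).
    rewrite <- edge_point_end. f_equal. lia.
Qed.

(** The [m v + 1] edges of the chain of [v] have squared length
    [|z_v B_v|^2 / (m v + 1)^2] and carry flow [f v]. *)
Lemma chain_cost v : (v < n)%nat ->
  sumR (chain v) (fun u => bflow u * dist2 (bpos u) (bpos (bpar u))) =
  f v * dist2 (z v) (tpos n z zBS (p v)) / INR (S (m v)).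
Proof.
  intros Hv. set (D := dist2 (z v) (tpos n z zBS (p v))).
  assert (HM : 0 < INR (S (m v))) by (apply lt_0_INR; lia).
  rewrite (sumR_ext _ _ (fun _ => f v * (D / INR (S (m v)) ^ 2))).
  - rewrite sumR_const. unfold chain. simpl length. rewrite length_seq. field. lra.
  - intros u Hu. destruct (chain_step v u Hv Hu) as (i & -> & ->).
    replace (bflow u) with (f v).
    + unfold edge_point. rewrite dist2_interp, (S_INR i). fold D. field. lra.
    + destruct Hu as [<-|Hu]; [rewrite bflow_source; auto|]. apply in_seq in Hu.
      replace u with (bead v (u - bead v 0)) by (unfold bead in *; lia).
      rewrite bflow_bead; auto. unfold bead in *; lia.
Qed.

Lemma beaded_cost : sumR (seq 0 sink) (fun u => bflow u * dist2 (bpos u) (bpos (bpar u))) =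
  sumR (seq 0 n) (fun v => f v * dist2 (z v) (tpos n z zBS (p v)) / INR (S (m v))).
Proof.
  rewrite sumR_chains. apply sumR_ext. intros v Hv. apply in_seq in Hv. apply chain_cost. lia.
Qed.

(** Beads of different edges may coincide with each other or with terminals,
    so the beaded tree is made an honest FQST by shifting bead number [s]
    horizontally by [e (s + 1)]; terminals stay put. *)
Definition lift (u : nat) : R :=
  if andb (Nat.leb n u) (Nat.ltb u sink) then INR (S (u - n)) else 0.

Definition beaded (e : R) : fqst :=
  mkFQST K (fun s => shift_x (e * lift (n + s)) (bpos (n + s))) bpar bflow.

Lemma fpos_beaded e u : fpos n z zBS (beaded e) u = shift_x (e * lift u) (bpos u).
Proof.
  unfold fpos. simpl fk. fold sink.
  destruct (Nat.ltb_spec u n); [|destruct (Nat.ltb_spec u sink)].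
  - unfold lift, bpos. decide_nat_tests. simpl andb. rewrite Rmult_0_r, shift_x_0. reflexivity.
  - cbn [Defs.fsp beaded]. replace (n + (u - n))%nat with u by lia. reflexivity.
  - unfold lift, bpos. decide_nat_tests. simpl andb. rewrite Rmult_0_r, shift_x_0. reflexivity.
Qed.

(** The first-order coefficient of the cost increase caused by the shift. *)
Definition beaded_error : R := sumR (seq 0 sink) (fun u =>
  bflow u * (dist2 (bpos u) (bpos (bpar u)) + 2 * (lift u - lift (bpar u)) ^ 2)).

Lemma beaded_error_nonneg : 0 <= beaded_error.
Proof.
  apply sumR_nonneg. intros u Hu. apply in_seq in Hu.
  destruct bflow_valid as [Hcons _]. destruct (Hcons u ltac:(lia)) as [Hpos _].
  pose proof (dist2_nonneg (bpos u) (bpos (bpar u))).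
  pose proof (pow2_ge_0 (lift u - lift (bpar u))).
  apply Rmult_le_pos; lra.
Qed.

Lemma beaded_cost_bound e : 0 <= e <= 1 ->
  L n z zBS (beaded e) <=
  sumR (seq 0 n) (fun v => f v * dist2 (z v) (tpos n z zBS (p v)) / INR (S (m v)))
  + e * beaded_error.
Proof.
  intros He. rewrite <- beaded_cost. unfold beaded_error. rewrite <- sumR_scal, <- sumR_plus.
  unfold L. simpl fk. fold sink. apply sumR_le. intros u Hu. apply in_seq in Hu.
  simpl fflow. simpl fpar. rewrite !fpos_beaded.
  destruct bflow_valid as [Hcons _]. destruct (Hcons u ltac:(lia)) as [Hpos _].
  pose proof (dist2_shift_x (bpos u) (bpos (bpar u)) (lift u) (lift (bpar u)) e He). nra.
Qed.

Hypothesis z_inj : forall i j, (i < n)%nat -> (j < n)%nat -> z i = z j -> i = j.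
Hypothesis z_not_sink : forall i, (i < n)%nat -> z i <> zBS.

Lemma node_kind u : (u <= sink)%nat ->
  ((n <= u < sink)%nat /\ lift u = INR (u - n) + 1) \/
  ((u < n)%nat /\ lift u = 0 /\ bpos u = z u) \/
  (u = sink /\ lift u = 0 /\ bpos u = zBS).
Proof.
  intros Hu. unfold lift, bpos.
  destruct (Nat.ltb_spec u n); [|destruct (Nat.ltb_spec u sink)]; decide_nat_tests; cbn [andb].
  - right; left; auto.
  - left. rewrite S_INR. auto.
  - right; right. repeat split; lia.
Qed.

Lemma bpos_lift_inj u v : (u <= sink)%nat -> (v <= sink)%nat ->
  bpos u = bpos v -> lift u = lift v -> u = v.
Proof.
  intros Hu Hv Epos Elift. pose proof (pos_INR (u - n)); pose proof (pos_INR (v - n)).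
  destruct (node_kind u Hu) as [(Hu1 & Lu)|[(Hu1 & Lu & Pu)|(Hu1 & Lu & Pu)]];
  destruct (node_kind v Hv) as [(Hv1 & Lv)|[(Hv1 & Lv & Pv)|(Hv1 & Lv & Pv)]];
  rewrite Lu, Lv in Elift; try lra; rewrite ?Pu, ?Pv in Epos.
  - assert (E : INR (u - n) = INR (v - n)) by lra. apply INR_eq in E. lia.
  - apply z_inj; auto.
  - exfalso. apply (z_not_sink u); auto.
  - exfalso. apply (z_not_sink v); auto.
  - lia.
Qed.

Lemma beaded_FQST a : 0 < a -> exists e, 0 < e < a /\ is_FQST n z zBS (beaded e).
Proof.
  intros Ha. destruct (generic_shift bpos lift sink a Ha) as (e & He & Hgeneric).
  exists e. split; auto. split; [|split]; simpl fk; fold sink.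
  - exact bpar_tree.
  - exact bflow_valid.
  - intros u v Hu Hv E. rewrite !fpos_beaded in E.
    destruct (Hgeneric u v Hu Hv E). apply bpos_lift_inj; auto.
Qed.

Lemma BST_cost_beaded c : BST_cost c n z zBS p f m =
  sumR (seq 0 n) (fun v => f v * dist2 (z v) (tpos n z zBS (p v)) / INR (S (m v))) + c * INR K.
Proof.
  unfold BST_cost, K. rewrite INR_offset. f_equal. apply sumR_ext. intros v Hv. apply in_seq in Hv.
  replace (tpos n z zBS v) with (z v) by (unfold tpos; decide_nat_tests; reflexivity).
  unfold Defs.dist. assert (HM : 0 < INR (S (m v))) by (apply lt_0_INR; lia).
  replace ((sqrt (dist2 (z v) (tpos n z zBS (p v))) / INR (S (m v))) ^ 2)
    with (sqrt (dist2 (z v) (tpos n z zBS (p v))) ^ 2 / INR (S (m v)) ^ 2) by (field; lra).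
  rewrite pow2_sqrt by apply dist2_nonneg. field. lra.
Qed.

End BeadedTree.

Lemma le_of_small_excess x y C : 0 <= C ->
  (forall a, 0 < a -> exists e, 0 < e < a /\ x <= y + e * C) -> x <= y.
Proof.
  intros HC H. destruct (Rle_lt_dec x y) as [|Hxy]; auto. exfalso.
  destruct (H ((x - y) / (C + 1))) as (e & He & Hx); [apply Rdiv_lt_0_compat; lra|].
  assert (e * (C + 1) < x - y).
  { destruct He as [_ He]. apply Rmult_lt_compat_r with (r := C + 1) in He; [|lra].
    unfold Rdiv in He. rewrite Rmult_assoc, Rinv_l, Rmult_1_r in He; lra. }
  nra.
Qed.

(** Upper bound: a node-weighted MFQST costs no more than the beaded tree
    over any spanning tree of the terminals, for any numbers of beads, since
    arbitrarily small shifts of the latter are FQSTs. *)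
Lemma MFQST_cost_le_BST c n z zBS T p f m :
  (forall i j, (i < n)%nat -> (j < n)%nat -> z i = z j -> i = j) ->
  (forall i, (i < n)%nat -> z i <> zBS) ->
  is_MFQST c n z zBS T -> is_sink_tree n p -> valid_flow n n p f ->
  Lc c n z zBS T <= BST_cost c n z zBS p f m.
Proof.
  intros hz hBS [_ Hmin] Htree Hflow. rewrite BST_cost_beaded.
  apply (le_of_small_excess _ _ (beaded_error n p f m z zBS)).
  { apply beaded_error_nonneg; auto. }
  intros a Ha. destruct (beaded_FQST n p f m Htree Hflow z zBS hz hBS (Rmin a 1)) as (e & He & HF).
  { apply Rmin_pos; lra. }
  pose proof (Rmin_l a 1). pose proof (Rmin_r a 1).
  exists e. split; [lra|]. eapply Rle_trans; [apply Hmin, HF|].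
  pose proof (beaded_cost_bound n p f m Htree Hflow z zBS e ltac:(lra)). unfold Lc. simpl fk. lra.
Qed.

Lemma FQST_cost_lower_bound n z zBS T : is_FQST n z zBS T ->
  / INR (n + fk T + 1) * sumR (seq 0 n) (fun i => dist2 (z i) zBS) <= L n z zBS T.
Proof.
  intros (Htree & Hflow & _).
  pose proof (flow_cost_lower_bound _ _ Htree n (fflow T) (fpos n z zBS T) ltac:(lia) Hflow) as H.
  replace (fpos n z zBS T (n + fk T)) with zBS in H by (unfold fpos; decide_nat_tests; reflexivity).
  rewrite (sumR_ext _ _ (fun i => dist2 (z i) zBS)) in H; [exact H|].
  intros i Hi. apply in_seq in Hi. unfold fpos. decide_nat_tests. reflexivity.
Qed.

Theorem mainTheorem17 (c : R) (n : nat) (z : nat -> point) (zBS : point)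
  (hc : 0 < c) (hn : (1 <= n)%nat)
  (hz : forall i j, (i < n)%nat -> (j < n)%nat -> z i = z j -> i = j)
  (hBS : forall i, (i < n)%nat -> z i <> zBS)
  (T : fqst) (hT : is_MFQST c n z zBS T)
  (p : nat -> nat) (hp : is_EMST n z zBS p)
  (f : nat -> R) (hf : valid_flow n n p f)
  (m : nat -> nat) (hm : bead_counts c n z zBS p f m) :
  INR (fk T) <=
  / c * (BST_cost c n z zBS p f m
         - / INR (n + fk T + 1) * sumR (seq 0 n) (fun i => dist2 (z i) zBS)).
Proof.
  pose proof (MFQST_cost_le_BST c n z zBS T p f m hz hBS hT (proj1 hp) hf) as Hupper.
  pose proof (FQST_cost_lower_bound n z zBS T (proj1 hT)) as Hlower.
  unfold Lc in Hupper.
  apply Rmult_le_reg_l with c; [exact hc|].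
  rewrite <- Rmult_assoc, Rinv_r, Rmult_1_l by lra. lra.
Qed.
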